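(* In any execution of the algorithm described in the context on a camera object $S$ and an associated versioned CAS object $O$ (after $O$'s constructor has completed), in every configuration the only VNode in the version list of $O$ that can have an invalid timestamp is the head of the version list.
   Context: Camera $S$ has an integer field timestamp, initially 0; takeSnapshot(): read $t:=S.\mathit{timestamp}$, perform CAS$(S.\mathit{timestamp},t,t+1)$, return $t$. A VNode has fields val and nextv (both immutable after creation) and ts (an integer or special value TBD, initially TBD). Versioned CAS object $O$ has a field $\mathit{VHead}$. Constructor with value $v$: $\mathit{VHead}:=$ new VNode(val $v$, nextv NULL); initTS($\mathit{VHead}$). initTS($n$): if $n.ts=$TBD, read $c:=S.\mathit{timestamp}$ and CAS$(n.ts,\mathrm{TBD},c)$. readSnapshot($ts$): $node:=\mathit{VHead}$; initTS($node$); while $node.ts>ts$, $node:=node.nextv$; return $node.val$. vRead(): $h:=\mathit{VHead}$; initTS($h$); return $h.val$. vCAS(oldV,newV): $h:=\mathit{VHead}$; initTS($h$); if $h.val\neq$ oldV return false; if newV $=$ oldV return true; $m:=$ new VNode(val newV, nextv $h$); if CAS$(\mathit{VHead},h,m)$ succeeds, initTS($m$) and return true; else delete $m$, call initTS on the current value of $\mathit{VHead}$, return false. The version list of $O$ is obtained by starting at the VNode pointed to by $\mathit{VHead}$ and following nextv pointers; its head is the VNode pointed to by $\mathit{VHead}$. A VNode's timestamp is valid in a configuration if its ts field is not TBD there, and invalid otherwise. *)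

(* Operational model of the camera S and one versioned CAS
   object O: shared memory, per-process program counters, and an
   interleaving step relation whose atomic steps are the shared-memory
   primitives (reads / CAS / allocation) of the algorithm. *)
From Stdlib Require Import Arith.

Set Implicit Arguments.

Section Model.
Variable V : Type.   (* values stored in O *)
Variable P : Type.

(* VNodes live in a heap indexed by locations (nat). ts = None is TBD. *)
Record vnode := VNode { val : V; nextv : option nat; ts : option nat }.

Record mem := Mem {
  timestamp : nat;
  vhead : nat;
  heap : nat -> option vnode
}.

Definition upd (h : nat -> option vnode) (l : nat) (x : option vnode) :=
  fun l' => if Nat.eqb l' l then x else h l'.

(* where to continue after an initTS call *)
Inductive ret :=
| RetRS (t : nat) (n : nat)
| RetVR
| RetVC (oldV newV : V) (h : nat)
| RetDone.

Inductive pc :=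
| Idle
| TS0 | TS1 (t : nat)
| RS0 (t : nat) | RSloop (t : nat) (n : nat)
| VR0
| VC0 (oldV newV : V)
| VC1 (oldV newV : V) (h : nat)
| VC2 (oldV newV : V) (h m : nat)
| VC3
| IT0 (n : nat) (r : ret)
| IT1 (n : nat) (r : ret)
| IT2 (n : nat) (c : nat) (r : ret).

Definition ret_pc (r : ret) : pc :=
  match r with
  | RetRS t n => RSloop t n
  | RetVR => Idle
  | RetVC o nw h => VC1 o nw h
  | RetDone => Idle
  end.

Inductive pstep : pc -> mem -> pc -> mem -> Prop :=
| s_inv_ts m : pstep Idle m TS0 m
| s_inv_rs m t : pstep Idle m (RS0 t) m
| s_inv_vr m : pstep Idle m VR0 m
| s_inv_vc m o nw : pstep Idle m (VC0 o nw) m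
| s_ts0 m : pstep TS0 m (TS1 (timestamp m)) m
| s_ts1_ok m t : timestamp m = t ->
    pstep (TS1 t) m Idle (Mem (S t) (vhead m) (heap m))
| s_ts1_fail m t : timestamp m <> t -> pstep (TS1 t) m Idle m
| s_rs0 m t : pstep (RS0 t) m (IT0 (vhead m) (RetRS t (vhead m))) m
| s_rs_next m t nd x t' nd' : heap m nd = Some x -> ts x = Some t' -> t' > t ->
    nextv x = Some nd' -> pstep (RSloop t nd) m (RSloop t nd') m
| s_rs_stop m t nd x : heap m nd = Some x ->
    (forall t', ts x = Some t' -> t' <= t) ->   (* a TBD ts also ends the loop *)
    pstep (RSloop t nd) m Idle m
| s_vr0 m : pstep VR0 m (IT0 (vhead m) RetVR) m
| s_vc0 m o nw : pstep (VC0 o nw) m (IT0 (vhead m) (RetVC o nw (vhead m))) m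
| s_vc1_neq m o nw h x : heap m h = Some x -> val x <> o ->
    pstep (VC1 o nw h) m Idle m
| s_vc1_same m o nw h x : heap m h = Some x -> val x = o -> nw = o ->
    pstep (VC1 o nw h) m Idle m
| s_vc1_alloc m o nw h x l : heap m h = Some x -> val x = o -> nw <> o ->
    heap m l = None ->
    pstep (VC1 o nw h) m (VC2 o nw h l)
      (Mem (timestamp m) (vhead m)
           (upd (heap m) l (Some (VNode nw (Some h) None))))
| s_vc2_ok m o nw h l : vhead m = h ->
    pstep (VC2 o nw h l) m (IT0 l RetDone) (Mem (timestamp m) l (heap m))
| s_vc2_fail m o nw h l : vhead m <> h ->
    pstep (VC2 o nw h l) m VC3 m   (* "delete m": modelled as a no-op *)
| s_vc3 m : pstep VC3 m (IT0 (vhead m) RetDone) m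
| s_it0_valid m n r x t : heap m n = Some x -> ts x = Some t ->
    pstep (IT0 n r) m (ret_pc r) m
| s_it0_tbd m n r x : heap m n = Some x -> ts x = None ->
    pstep (IT0 n r) m (IT1 n r) m
| s_it1 m n r : pstep (IT1 n r) m (IT2 n (timestamp m) r) m
| s_it2_ok m n c r x : heap m n = Some x -> ts x = None ->
    pstep (IT2 n c r) m (ret_pc r)
      (Mem (timestamp m) (vhead m)
           (upd (heap m) n (Some (VNode (val x) (nextv x) (Some c)))))
| s_it2_fail m n c r x t : heap m n = Some x -> ts x = Some t ->
    pstep (IT2 n c r) m (ret_pc r) m.

Record config := Config { cmem : mem; cpc : P -> pc }.

Definition step (c c' : config) : Prop :=
  exists p : P,
    pstep (cpc c p) (cmem c) (cpc c' p) (cmem c') /\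
    (forall p', p' <> p -> cpc c' p' = cpc c p').

Inductive reachable (c : config) : config -> Prop :=
| reach_refl : reachable c c
| reach_step c1 c2 : reachable c c1 -> step c1 c2 -> reachable c c2.

(* Configurations right after O's constructor completed: the heap holds only
   the initial VNode (val v0, nextv NULL) with a valid timestamp, pointed to
   by VHead; S.timestamp is arbitrary; every process is idle or in the middle
   of a takeSnapshot (the only operation possible before O exists). *)
Definition camera_only (q : pc) : Prop :=
  q = Idle \/ q = TS0 \/ exists t, q = TS1 t.

Definition init_config (v0 : V) (c : config) : Prop :=
  (exists t0, heap (cmem c) (vhead (cmem c)) = Some (VNode v0 None (Some t0))) /\
  (forall l, l <> vhead (cmem c) -> heap (cmem c) l = None) /\
  (forall p, camera_only (cpc c p)).

Inductive in_vlist (m : mem) : nat -> Prop :=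
| vl_head : in_vlist m (vhead m)
| vl_next l x l' : in_vlist m l -> heap m l = Some x -> nextv x = Some l' ->
    in_vlist m l'.
End Model.

(* Memory only grows: an allocated VNode stays allocated, its nextv never
   changes, and a valid timestamp never becomes TBD again.  A new head m is
   installed only by the CAS(VHead, h, m) of a vCAS whose initTS(h) has already
   returned, so the old head h, which is m.nextv, has a valid timestamp at that
   moment.  Hence the invariant: every node of the version list is allocated,
   and every node other than the head has a valid timestamp; alongside it, a
   vCAS past initTS(h) knows that h is stamped, and once it has allocated m,
   that m.nextv = h. *)
From Stdlib Require Import Arith Classical.

Set Implicit Arguments.

Section VersionList.
Variable V P : Type.

Definition mem_le (m m' : mem V) : Prop :=
  forall n x, heap m n = Some x ->
    exists y, heap m' n = Some y /\ nextv y = nextv x /\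
              (forall t, ts x = Some t -> ts y = Some t).

Definition valid_ts (m : mem V) (n : nat) : Prop :=
  exists x t, heap m n = Some x /\ ts x = Some t.

Definition vlist_inv (m : mem V) : Prop :=
  forall k, in_vlist m k ->
    exists x, heap m k = Some x /\ (ts x = None -> k = vhead m).

Definition ret_inv (n : nat) (r : ret V) : Prop :=
  match r with RetVC _ _ h => n = h | _ => True end.

Definition pc_inv (m : mem V) (q : pc V) : Prop :=
  match q with
  | VC1 _ _ h => valid_ts m h
  | VC2 _ _ h l => valid_ts m h /\ exists y, heap m l = Some y /\ nextv y = Some h
  | IT0 n r | IT1 n r | IT2 n _ r => ret_inv n r
  | _ => True
  end.

Definition config_inv (c : config V P) : Prop :=
  vlist_inv (cmem c) /\ forall p, pc_inv (cmem c) (cpc c p).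

Lemma upd_same (h : nat -> option (vnode V)) l x : upd h l x l = x.
Proof. unfold upd; rewrite Nat.eqb_refl; reflexivity. Qed.

Lemma valid_ts_mem_le m m' n : mem_le m m' -> valid_ts m n -> valid_ts m' n.
Proof.
  intros Hle (x & t & Hx & Ht).
  destruct (Hle _ _ Hx) as (y & Hy & _ & Hts).
  exists y, t; auto.
Qed.

Lemma pc_inv_mem_le m m' q : mem_le m m' -> pc_inv m q -> pc_inv m' q.
Proof.
  intros Hle; destruct q; simpl; auto.
  - apply valid_ts_mem_le; assumption.
  - intros [Hh (y & Hl & Hnext)]; split.
    + exact (valid_ts_mem_le Hle Hh).
    + destruct (Hle _ _ Hl) as (y' & Hl' & Hnext' & _).
      exists y'; split; congruence.
Qed.

Lemma pstep_mem_le q m q' m' : pstep q m q' m' -> mem_le m m'.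
Proof.
  intros Hs; destruct Hs; unfold mem_le, upd; simpl; intros k y Hk;
    try (exists y; auto; fail).
  - destruct (Nat.eqb_spec k l) as [->|]; [congruence|].
    exists y; auto.
  - destruct (Nat.eqb_spec k n) as [->|].
    + rewrite H in Hk; injection Hk as <-.
      eexists; split; [reflexivity|]; simpl; split; [reflexivity|congruence].
    + exists y; auto.
Qed.

Lemma in_vlist_links (m m' : mem V) :
  vhead m' = vhead m ->
  (forall k x', in_vlist m k -> heap m' k = Some x' ->
     exists x, heap m k = Some x /\ nextv x = nextv x') ->
  forall k, in_vlist m' k -> in_vlist m k.
Proof.
  intros Hhead Hlinks k Hk; induction Hk as [|l x' l' _ IH Hx' Hnext].
  - rewrite Hhead; constructor.
  - destruct (Hlinks _ _ IH Hx') as (x & Hx & Hxx').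
    apply (vl_next IH Hx); congruence.
Qed.

Lemma vlist_inv_mem_le m m' :
  vlist_inv m -> mem_le m m' -> vhead m' = vhead m -> vlist_inv m'.
Proof.
  intros Hm Hle Hhead.
  assert (Hsub : forall k, in_vlist m' k -> in_vlist m k).
  { apply in_vlist_links; [exact Hhead|].
    intros k x' Hk Hx'.
    destruct (Hm k Hk) as (x & Hx & _).
    destruct (Hle _ _ Hx) as (y & Hy & Hnext & _).
    exists x; split; congruence. }
  intros k Hk.
  destruct (Hm k (Hsub k Hk)) as (x & Hx & Htbd).
  destruct (Hle _ _ Hx) as (y & Hy & _ & Hts).
  exists y; split; [exact Hy|].
  intros Hy_tbd; rewrite Hhead; apply Htbd.
  destruct (ts x) as [t|]; [|reflexivity].
  rewrite (Hts t eq_refl) in Hy_tbd; discriminate.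
Qed.

Lemma vlist_inv_push m m' y :
  vlist_inv m -> valid_ts m (vhead m) -> heap m' = heap m ->
  heap m (vhead m') = Some y -> nextv y = Some (vhead m) -> vlist_inv m'.
Proof.
  intros Hm (h & t & Hh & Hht) Hheap Hy Hnext.
  assert (Hcases : forall k, in_vlist m' k -> k = vhead m' \/ in_vlist m k).
  { intros k Hk; induction Hk as [|l x l' _ IH Hx Hxl'].
    - left; reflexivity.
    - right; rewrite Hheap in Hx.
      destruct IH as [->|IH].
      + rewrite Hy in Hx; injection Hx as <-.
        rewrite Hnext in Hxl'; injection Hxl' as <-.
        constructor.
      + exact (vl_next IH Hx Hxl'). }
  intros k Hk; rewrite Hheap.
  destruct (Hcases k Hk) as [->|Hkm].
  - exists y; auto.
  - destruct (Hm k Hkm) as (x & Hx & Htbd).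
    exists x; split; [exact Hx|].
    intros Hx_tbd; specialize (Htbd Hx_tbd); subst k; congruence.
Qed.

Lemma pstep_vlist_inv q m q' m' :
  pstep q m q' m' -> vlist_inv m -> pc_inv m q -> vlist_inv m'.
Proof.
  intros Hs Hm Hq.
  pose proof (pstep_mem_le Hs) as Hle.
  destruct Hs; try (apply (vlist_inv_mem_le Hm Hle); reflexivity).
  (* only the successful CAS on VHead is left *)
  destruct Hq as [Hh (y & Hl & Hnext)]; subst h.
  exact (vlist_inv_push (m' := Mem (timestamp m) l (heap m)) Hm Hh eq_refl Hl Hnext).
Qed.

Lemma pc_inv_ret m n r : valid_ts m n -> ret_inv n r -> pc_inv m (ret_pc r).
Proof. destruct r; simpl; intros Hn Hr; subst; auto. Qed.

Lemma pstep_pc_inv q m q' m' : pstep q m q' m' -> pc_inv m q -> pc_inv m' q'.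
Proof.
  intros Hs Hq; pose proof (pstep_mem_le Hs) as Hle.
  destruct Hs; simpl in *; auto.
  - split; [exact (valid_ts_mem_le Hle Hq)|].
    rewrite upd_same; eexists; split; reflexivity.
  - apply (pc_inv_ret (n := n)); [exists x, t|]; auto.
  - apply (pc_inv_ret (n := n)); [|exact Hq].
    exists (VNode (val x) (nextv x) (Some c)), c.
    simpl; rewrite upd_same; auto.
  - apply (pc_inv_ret (n := n)); [exists x, t|]; auto.
Qed.

Lemma step_config_inv c c' : config_inv c -> step c c' -> config_inv c'.
Proof.
  intros [Hm Hpc] (p & Hs & Hother); split.
  - exact (pstep_vlist_inv Hs Hm (Hpc p)).
  - intros p'; destruct (classic (p' = p)) as [->|Hne].
    + exact (pstep_pc_inv Hs (Hpc p)).
    + rewrite (Hother p' Hne).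
      exact (pc_inv_mem_le _ (pstep_mem_le Hs) (Hpc p')).
Qed.

Lemma init_config_inv v0 c : init_config v0 c -> config_inv c.
Proof.
  intros [[t0 Hhead] [_ Hidle]]; split.
  - intros k Hk.
    assert (Hk_head : k = vhead (cmem c)).
    { induction Hk as [|l x l' _ IH Hx Hnext]; [reflexivity|].
      subst l; rewrite Hhead in Hx; injection Hx as <-; discriminate. }
    subst k; eexists; split; [exact Hhead|auto].
  - intros p; destruct (Hidle p) as [E|[E|[t E]]]; rewrite E; exact I.
Qed.

Lemma reachable_ind (I : config V P -> Prop) c0 c :
  I c0 -> (forall c1 c2, I c1 -> step c1 c2 -> I c2) -> reachable c0 c -> I c.
Proof. intros H0 Hstep Hr; induction Hr; eauto. Qed.

End VersionList.

Theorem lemmaA3 (V P : Type) (v0 : V) (c0 c : config V P) :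
  init_config v0 c0 -> reachable c0 c ->
  forall (l : nat) (x : vnode V),
    in_vlist (cmem c) l -> heap (cmem c) l = Some x -> ts x = None ->
    l = vhead (cmem c).
Proof.
  intros Hinit Hreach l x Hl Hx Htbd.
  assert (Hinv : config_inv c).
  { revert Hreach; apply reachable_ind.
    - exact (init_config_inv Hinit).
    - exact (@step_config_inv V P). }
  destruct (proj1 Hinv l Hl) as (y & Hy & Hy_tbd).
  rewrite Hx in Hy; injection Hy as <-.
  exact (Hy_tbd Htbd).
Qed.
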